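(* For every integer $k\ge2$ there exist a set $V$ with $|V|=k^2$ and a partial orientation $o$ on $V$ such that: (i) among any four distinct elements of $V$ some three $x,y,z$ satisfy $o(xyz)=0$; (ii) for all distinct $A,B,C,D\in V$, $o(ABD)=o(BCD)=o(CAD)=1$ implies $o(ABC)=1$; (iii) for all distinct $A,B,C,D\in V$, if $o(ABC)=o(ABD)=0$, $o(ACD)\ne0$ and $o(BCD)\ne0$, then $o(ACD)=o(BCD)$; and (iv) the largest subset $S\subseteq V$ such that $o(xyz)=0$ for all distinct $x,y,z\in S$ has exactly $2k-1$ elements.
   Context: A partial orientation on $V$ is a map $o$ from ordered triples of distinct elements of $V$ to $\{+1,0,-1\}$ with $o(uvw)=o(wuv)=o(vwu)=-o(uwv)=-o(vuw)=-o(wvu)$. *)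

From mathcomp Require Import all_boot all_order all_algebra.
Set Implicit Arguments. Unset Strict Implicit. Unset Printing Implicit Defensive.
Import GRing.Theory Num.Theory.
Local Open Scope ring_scope.

(* A ternary map on V; only its values on triples of distinct elements matter. *)
Definition pairwise_distinct3 (V : eqType) (x y z : V) : bool :=
  [&& x != y, y != z & x != z].

Definition partial_orientation (V : eqType) (o : V -> V -> V -> int) : Prop :=
  forall u v w : V, pairwise_distinct3 u v w ->
    o u v w \in [:: 1; 0; -1] /\
    o u v w = o w u v /\ o u v w = o v w u /\
    o u v w = - o u w v /\ o u v w = - o v u w /\ o u v w = - o w v u.

Definition null_set (V : finType) (o : V -> V -> V -> int) (S : {set V}) : Prop :=
  forall x y z, x \in S -> y \in S -> z \in S -> pairwise_distinct3 x y z ->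
    o x y z = 0.

Definition pairwise_distinct4 (V : eqType) (a b c d : V) : bool :=
  [&& a != b, a != c, a != d, b != c, b != d & c != d].

From mathcomp Require Import all_boot all_order all_algebra zify.
Import GRing.Theory Num.Theory.
Set Implicit Arguments. Unset Strict Implicit.
Local Open Scope ring_scope.

(* Orient a triple +1, -1 or 0 according as it is a directed 3-cycle of an
   asymmetric relation E, a reversed one, or neither.  Properties (i)-(iii)
   then hold for every such E: among the edges from a to b, c, d two point the
   same way, so one of the triangles at a is not a cycle; and a cyclic
   triangle is oriented like any one of its edges.  On the k x k grid let
   x -> y when y lies after x in the same row or the same column, or strictly
   before x in both coordinates.  The cross formed by the first row and the
   first column is null, since every edge leaving it increases the sum of the
   coordinates.  Conversely, in a null set S the points that are not leftmost
   in their row of S occupy distinct columns other than the first: two of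
   them x, x' in one column with x in an earlier row, together with a point y
   of S left of x in its row, would form the cycle y -> x -> x' -> y.  Hence
   |S| <= k + (k - 1). *)

Section CycleOrientation.
Variables (V : eqType) (E : rel V).

Definition cyclic3 x y z := [&& E x y, E y z & E z x].

Definition orient x y z : int :=
  (cyclic3 x y z : nat)%:Z - (cyclic3 z y x : nat)%:Z.

Lemma cyclic3R x y z : cyclic3 x y z = cyclic3 y z x.
Proof. by rewrite /cyclic3 andbC -andbA. Qed.

Lemma orientR x y z : orient x y z = orient y z x.
Proof. by rewrite /orient (cyclic3R x y z) -(cyclic3R x z y). Qed.

Lemma orientN x y z : orient x z y = - orient x y z.
Proof. by rewrite /orient (cyclic3R x z y) -(cyclic3R x y z) opprB. Qed.

Lemma orient_partial : partial_orientation orient.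
Proof.
move=> u v w _; split.
  by rewrite /orient; case: (cyclic3 u v w); case: (cyclic3 w v u).
have orient_vuw : orient v u w = - orient u v w by rewrite orientR orientN.
split; first by rewrite [RHS]orientR.
split; first by rewrite orientR.
split; first by rewrite (orientN u v) opprK.
split; first by rewrite orient_vuw opprK.
by rewrite (orientR w) orient_vuw opprK.
Qed.

Hypothesis E_asym : forall x y, E x y -> ~~ E y x.

Lemma edge_neq x y : E x y -> x != y.
Proof. by move=> xy; apply: contraTneq xy => ->; apply/negP => yy; case/negP: (E_asym yy). Qed.

Lemma cyclic3_distinct x y z : cyclic3 x y z -> pairwise_distinct3 x y z.
Proof.
case/and3P=> /edge_neq xy /edge_neq yz /edge_neq zx.
by rewrite /pairwise_distinct3 xy yz eq_sym zx.
Qed.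

Lemma cyclic3_rev x y z : cyclic3 x y z -> cyclic3 z y x = false.
Proof. by case/and3P=> xy _ _; rewrite /cyclic3 (negbTE (E_asym xy)) !andbF. Qed.

Lemma orient_eq1 x y z : (orient x y z == 1) = cyclic3 x y z.
Proof.
rewrite /orient; case cxyz: (cyclic3 x y z); first by rewrite cyclic3_rev.
by case: (cyclic3 z y x).
Qed.

Lemma orient_neq0 x y z : orient x y z != 0 -> cyclic3 x y z || cyclic3 z y x.
Proof. by rewrite /orient; case: (cyclic3 x y z); case: (cyclic3 z y x). Qed.

Lemma orient_neq0_dir x y z : orient x y z != 0 -> E x y != E x z.
Proof.
move/orient_neq0/orP=> -[] /and3P[xy yz zx]; first by rewrite xy (negbTE (E_asym zx)).
by rewrite zx (negbTE (E_asym yz)).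
Qed.

Lemma orient_sign x y z : orient x y z != 0 -> orient x y z = if E y z then 1 else -1.
Proof.
move=> o0; case/orP: (orient_neq0 o0) => cyc; rewrite /orient cyc (cyclic3_rev cyc).
  by case/and3P: cyc => _ yz _; rewrite yz.
by case/and3P: cyc => /E_asym/negbTE zy _ _; rewrite zy.
Qed.

Lemma orient_four_null a b c d : pairwise_distinct4 a b c d ->
  exists x y z, [/\ x \in [:: a; b; c; d], y \in [:: a; b; c; d],
    z \in [:: a; b; c; d], pairwise_distinct3 x y z & orient x y z = 0].
Proof.
case/and5P=> ab ac ad bc /andP[bd cd].
have [abc|/orient_neq0_dir abc] := eqVneq (orient a b c) 0.
  by exists a, b, c; rewrite !inE !eqxx ?orbT /pairwise_distinct3 ab bc ac.
have [abd|/orient_neq0_dir abd] := eqVneq (orient a b d) 0.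
  by exists a, b, d; rewrite !inE !eqxx ?orbT /pairwise_distinct3 ab bd ad.
have [acd|/orient_neq0_dir acd] := eqVneq (orient a c d) 0.
  by exists a, c, d; rewrite !inE !eqxx ?orbT /pairwise_distinct3 ac cd ad.
by move: abc abd acd; case: (E a b); case: (E a c); case: (E a d).
Qed.

Lemma orient_apex_eq1 A B C D :
  orient A B D = 1 -> orient B C D = 1 -> orient C A D = 1 -> orient A B C = 1.
Proof.
move=> /eqP + /eqP + /eqP; rewrite !orient_eq1.
move=> /and3P[AB _ _] /and3P[BC _ _] /and3P[CA _ _].
by apply/eqP; rewrite orient_eq1 /cyclic3 AB BC CA.
Qed.

Lemma orient_common_edge A B C D :
  orient A C D != 0 -> orient B C D != 0 -> orient A C D = orient B C D.
Proof. by move=> /orient_sign -> /orient_sign ->. Qed.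

End CycleOrientation.

Section NullSets.
Variables (V : finType) (E : rel V).
Hypothesis E_asym : forall x y, E x y -> ~~ E y x.

Lemma null_set_orientP (S : {set V}) : null_set (orient E) S <->
  (forall x y z, x \in S -> y \in S -> z \in S -> ~~ cyclic3 E x y z).
Proof.
split=> [nS x y z xS yS zS | acyc x y z xS yS zS _].
  apply/negP => cyc; have /eqP o1 : orient E x y z == 1 by rewrite orient_eq1.
  by move: (nS x y z xS yS zS (cyclic3_distinct E_asym cyc)); rewrite o1.
by rewrite /orient (negbTE (acyc x y z _ _ _)) ?(negbTE (acyc z y x _ _ _)).
Qed.

End NullSets.

Section Grid.
Local Open Scope nat_scope.
Variable n : nat.

Definition grid := ('I_n.+1 * 'I_n.+1)%type.

Definition grid_edge : rel grid := fun x y =>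
  [|| (x.1 == y.1) && (x.2 < y.2), (x.2 == y.2) && (x.1 < y.1)
    | (y.1 < x.1) && (y.2 < x.2)].

Lemma grid_edge_asym x y : grid_edge x y -> ~~ grid_edge y x.
Proof. rewrite /grid_edge -!val_eqE /=; lia. Qed.

Definition grid_cross : {set grid} := setX [set ord0] setT :|: setX setT [set ord0].

Lemma card_grid_cross : #|grid_cross| = n.+1 + n.
Proof.
rewrite cardsU !cardsX !cards1 !cardsT card_ord.
have -> : setX [set ord0] setT :&: setX setT [set ord0] = setX [set ord0] [set ord0] :> {set grid}.
  by apply/setP => x; rewrite !inE andbT.
by rewrite cardsX !cards1 mul1n muln1 addnS subn1.
Qed.

Lemma grid_cross_null : null_set (orient grid_edge) grid_cross.
Proof.
have edge_up x y : x \in grid_cross -> grid_edge x y -> x.1 + x.2 < y.1 + y.2.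
  by rewrite !inE /grid_edge /= andbT -!val_eqE /=; lia.
apply/(null_set_orientP grid_edge_asym).
move=> x y z xS yS zS; apply/and3P.
move=> -[/(edge_up _ _ xS) xy /(edge_up _ _ yS) yz /(edge_up _ _ zS) zx].
by have := ltn_trans xy (ltn_trans yz zx); rewrite ltnn.
Qed.

Definition row_min (S : {set grid}) : {set grid} :=
  [set x in S | [forall y in S, (y.1 == x.1) ==> (x.2 <= y.2)]].

Lemma card_row_min S : #|row_min S| <= n.+1.
Proof.
suff /leq_card_in : {in row_min S &, injective fst} by rewrite card_ord.
move=> [a b] [a' b'].
rewrite !inE /= => /andP[xS /forall_inP xmin] /andP[x'S /forall_inP x'min] eq_a.
have := xmin _ x'S; have := x'min _ xS; rewrite /= eq_a eqxx /= => le_b'b le_bb'.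
by congr (_, _); apply/val_inj/eqP; rewrite eqn_leq le_bb' le_b'b.
Qed.

Lemma not_row_minP S x : x \in S :\: row_min S ->
  exists2 y, y \in S & (y.1 == x.1) && (y.2 < x.2).
Proof.
rewrite !inE => /andP[/nandP[/negP // | /forall_inPn[y yS]]].
by rewrite negb_imply -ltnNge; exists y.
Qed.

Lemma not_row_min_cycle S x x' : x \in S :\: row_min S -> x' \in S ->
  x.2 = x'.2 -> x.1 < x'.1 -> exists2 y, y \in S & cyclic3 grid_edge y x x'.
Proof.
move=> /not_row_minP[y yS /andP[/eqP y1 y2]] _ col row; exists y => //.
by rewrite /cyclic3 /grid_edge y1 -col !eqxx y2 row /= !orbT.
Qed.

Lemma card_not_row_min S : null_set (orient grid_edge) S -> #|S :\: row_min S| <= n.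
Proof.
move=> /(null_set_orientP grid_edge_asym) acyc.
have inS := subsetP (subsetDl S (row_min S)).
have lower x x' : x \in S :\: row_min S -> x' \in S :\: row_min S ->
    x.2 = x'.2 -> x'.1 <= x.1.
  move=> xS x'S col; rewrite leqNgt; apply/negP => row.
  have [y yS cyc] := not_row_min_cycle xS (inS _ x'S) col row.
  by case/negP: (acyc _ _ _ yS (inS _ xS) (inS _ x'S)).
have col_inj : {in S :\: row_min S &, injective snd}.
  move=> [a b] [a' b'] xS x'S /= col; subst b'.
  have /eqP -> // : a == a'.
  by rewrite -val_eqE eqn_leq (lower _ _ x'S xS) ?(lower _ _ xS x'S).
have col_pos x : x \in S :\: row_min S -> x.2 != ord0.
  by case/not_row_minP=> y _ /andP[_ y2]; rewrite -val_eqE -lt0n; apply: leq_ltn_trans y2.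
rewrite -(card_in_imset col_inj); apply: (@leq_trans #|[set~ (ord0 : 'I_n.+1)]|).
  by apply/subset_leq_card/subsetP => _ /imsetP[x xS ->]; rewrite !inE col_pos.
by rewrite cardsC1 card_ord.
Qed.

Lemma grid_null_card S : null_set (orient grid_edge) S -> #|S| <= n.+1 + n.
Proof.
move=> nS; rewrite -(cardsID (row_min S) S) leq_add ?card_not_row_min //.
exact: leq_trans (subset_leq_card (subsetIr _ _)) (card_row_min S).
Qed.

End Grid.

Theorem claim7 (k : nat) (hk : (2 <= k)%N) :
  exists (V : finType) (o : V -> V -> V -> int),
    #|V| = (k ^ 2)%N /\ partial_orientation o /\
       [/\
        (* (i) *)
        (forall a b c d : V, pairwise_distinct4 a b c d ->
           exists x y z : V, [/\ x \in [:: a; b; c; d], y \in [:: a; b; c; d],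
             z \in [:: a; b; c; d], pairwise_distinct3 x y z & o x y z = 0]),
        (* (ii) *)
        (forall A B C D : V, pairwise_distinct4 A B C D ->
           o A B D = 1 -> o B C D = 1 -> o C A D = 1 -> o A B C = 1),
        (* (iii) *)
        (forall A B C D : V, pairwise_distinct4 A B C D ->
           o A B C = 0 -> o A B D = 0 -> o A C D != 0 -> o B C D != 0 ->
           o A C D = o B C D) &
        (* (iv) *)
        ((exists S : {set V}, null_set o S /\ #|S| = (2 * k - 1)%N) /\
         (forall S : {set V}, null_set o S -> (#|S| <= 2 * k - 1)%N))].
Proof.
case: k hk => [|n] // _.
have asym := @grid_edge_asym n.
exists (grid n), (orient (@grid_edge n)).
split; first by rewrite card_prod card_ord mulnn.
split; first exact: orient_partial.
split.
- exact: orient_four_null asym.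
- by move=> A B C D _; exact: orient_apex_eq1.
- by move=> A B C D _ _ _; exact: orient_common_edge.
have -> : (2 * n.+1 - 1 = n.+1 + n)%N by lia.
split; last exact: grid_null_card.
by exists (grid_cross n); split; [exact: grid_cross_null | exact: card_grid_cross].
Qed.
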